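(* Let $\mathcal{D}$ be a set equipped with a finite (nonnegative) measure $\mu$, and let $f,g:\mathcal{D}\to\mathbb{R}$ be bounded measurable functions. Let $\lambda$ denote the product of $\mu$ with Lebesgue measure on $\mathbb{R}$, a measure on $\mathcal{D}\times\mathbb{R}$. For a bounded measurable $h:\mathcal{D}\to\mathbb{R}$ put $$A_h=\{(x,y)\in\mathcal{D}\times\mathbb{R} : 0\le y\le h(x)\}\ \cup\ \{(x,y)\in\mathcal{D}\times\mathbb{R} : h(x)\le y<0\}.$$ Then the intersection kernel satisfies $$\kappa_{\cap}(f,g):=\lambda(A_f\cap A_g)=\tfrac12\big(\|f\|_{1_\mu}+\|g\|_{1_\mu}-\|f-g\|_{1_\mu}\big)=\int_{\{x:\min(f(x),g(x))\ge 0\}}\min(f(x),g(x))\,d\mu(x)-\int_{\{x:\max(f(x),g(x))<0\}}\max(f(x),g(x))\,d\mu(x),$$ and, provided $\lambda(A_f\cup A_g)\neq 0$, the Tanimoto kernel satisfies $$\kappa_{tanimoto}(f,g):=\frac{\lambda(A_f\cap A_g)}{\lambda(A_f\cup A_g)}=\frac{\tfrac12\big(\|f\|_{1_\mu}+\|g\|_{1_\mu}-\|f-g\|_{1_\mu}\big)}{\tfrac12\big(\|f\|_{1_\mu}+\|g\|_{1_\mu}+\|f-g\|_{1_\mu}\big)} =\frac{\int_{\{\min(f,g)\ge 0\}}\min(f,g)\,d\mu-\int_{\{\max(f,g)<0\}}\max(f,g)\,d\mu}{\int_{\{\max(f,g)\ge 0\}}\max(f,g)\,d\mu-\int_{\{\min(f,g)<0\}}\min(f,g)\,d\mu},$$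 where $\min(f,g)$ and $\max(f,g)$ denote pointwise minimum and maximum.
   Context: For a measurable $h:\mathcal{D}\to\mathbb{R}$, $\|h\|_{1_\mu}=\int_{\mathcal{D}}|h(x)|\,d\mu(x)$. The set $A_h$ is the region between the graph of $h$ and the $x$-axis: the part above the axis where $h\ge0$ and the part below the axis where $h<0$. *)

From HB Require Import structures.
From mathcomp Require Import all_boot all_order all_algebra.
From mathcomp Require Import all_classical all_reals all_analysis.
Set Implicit Arguments. Unset Strict Implicit. Unset Printing Implicit Defensive.
Import Order.TTheory GRing.Theory Num.Theory.
Local Open Scope classical_set_scope.
Local Open Scope ring_scope.

Definition region (D : Type) (R : realType) (h : D -> R) : set (D * R) :=
  [set p | 0 <= p.2 <= h p.1] `|` [set p | h p.1 <= p.2 < 0].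

Definition L1norm d (D : measurableType d) (R : realType)
  (mu : set D -> \bar R) (h : D -> R) : \bar R :=
  (\int[mu]_(x in [set: D]) (`|h x|)%:E)%E.

(* The vertical section of A_h over x is the segment between 0 and h x, closed
   at 0: [0, h x] or [h x, 0[.  Sections of A_f `&` A_g and A_f `|` A_g are again
   such segments, with endpoints built from min and max of f x and g x, and
   mu \x lebesgue_measure is by definition the mu-integral of the lengths of
   the sections, so no measurability of the regions is involved.  Pointwise the
   two lengths equal (|f| + |g| -/+ |f - g|) / 2, and splitting them by sign
   gives the integrals over {min f g >= 0}, {max f g < 0}, etc.; linearity of
   the integral of the (bounded, hence integrable) f and g concludes. *)

From HB Require Import structures.
From mathcomp Require Import all_boot all_order all_algebra.
From mathcomp Require Import all_classical all_reals all_analysis.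
From mathcomp Require Import lra measurable_realfun.

Set Implicit Arguments.
Unset Strict Implicit.
Unset Printing Implicit Defensive.
Import Order.TTheory GRing.Theory Num.Theory.
Local Open Scope classical_set_scope.
Local Open Scope ring_scope.

Section span0.
Variable R : realType.
Implicit Types a b l u : R.

Definition span0 l u : set R := [set` `[0, u]] `|` [set` `[l, 0[].

Lemma span0E l u : span0 l u = [set y | if 0 <= y then y <= u else l <= y].
Proof.
apply/seteqP; split=> y; rewrite /span0/= !in_itv/=.
  by case: leP => y0 [/andP[]|/andP[]]; lra.
by case: leP => y0 yb; [left|right]; apply/andP; split.
Qed.

Lemma span0I l u l' u' :
  span0 l u `&` span0 l' u' = span0 (Num.max l l') (Num.min u u').
Proof.
rewrite !span0E; apply/funext => y; apply/propext => /=.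
by case: ifP => _; rewrite ?le_min ?ge_max; split=> [[-> ->]|/andP[-> ->]].
Qed.

Lemma span0U l u l' u' :
  span0 l u `|` span0 l' u' = span0 (Num.min l l') (Num.max u u').
Proof.
rewrite !span0E; apply/funext => y; apply/propext => /=.
case: ifP => _; rewrite ?le_max ?ge_min.
  by split=> [[->|->]|/orP[]->]; rewrite ?orbT//; [left|right].
by split=> [[->|->]|/orP[]->]; rewrite ?orbT//; [left|right].
Qed.

Lemma lebesgue_measure_span0 l u :
  lebesgue_measure (span0 l u) = (Num.max u 0 - Num.min l 0)%:E.
Proof.
rewrite measureU//=; last first.
  apply/seteqP; split=> y //=; rewrite !in_itv/= => -[/andP[y0 _] /andP[_]].
  by rewrite ltNge y0.
rewrite !lebesgue_measure_itv/= !lte_fin.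
by case: ltP => u0; case: ltP => l0; rewrite -?EFinD; congr EFin;
  rewrite /Num.max /Num.min; repeat case: ltP; lra.
Qed.

Definition overlap_len a b := Num.max (Num.min a b) 0 - Num.min (Num.max a b) 0.

Definition cover_len a b := Num.max (Num.max a b) 0 - Num.min (Num.min a b) 0.

Lemma lebesgue_measure_span0I a b :
  lebesgue_measure (span0 a a `&` span0 b b) = (overlap_len a b)%:E.
Proof. by rewrite span0I lebesgue_measure_span0. Qed.

Lemma lebesgue_measure_span0U a b :
  lebesgue_measure (span0 a a `|` span0 b b) = (cover_len a b)%:E.
Proof. by rewrite span0U lebesgue_measure_span0. Qed.

Lemma overlap_lenE a b : overlap_len a b = 2^-1 * (`|a| + `|b| - `|a - b|).
Proof.
wlog ab : a b / a <= b.
  move=> wlog_ab; have [/wlog_ab//|/ltW/wlog_ab] := leP a b.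
  by rewrite /overlap_len (minC b) (maxC b) distrC (addrC `|b|).
rewrite /overlap_len (min_idPl ab) (max_idPr ab).
rewrite distrC [`|b - a|]ger0_norm ?subr_ge0//.
by case: (ger0P a); case: (ger0P b); lra.
Qed.

Lemma cover_lenE a b : cover_len a b = 2^-1 * (`|a| + `|b| + `|a - b|).
Proof.
wlog ab : a b / a <= b.
  move=> wlog_ab; have [/wlog_ab//|/ltW/wlog_ab] := leP a b.
  by rewrite /cover_len (minC b) (maxC b) distrC (addrC `|b|).
rewrite /cover_len (min_idPl ab) (max_idPr ab).
rewrite distrC [`|b - a|]ger0_norm ?subr_ge0//.
by case: (ger0P a); case: (ger0P b); lra.
Qed.

End span0.

Section product_measure1_region.
Context d (D : measurableType d) (R : realType).
Variable mu : {measure set D -> \bar R}.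
Local Notation lambda := (mu \x (@lebesgue_measure R))%E.

Lemma xsection_region (h : D -> R) x : xsection (region h) x = span0 (h x) (h x).
Proof. by apply/funext => y; rewrite /xsection/= inE /span0/= !in_itv. Qed.

Lemma product_measure1_regionI (f g : D -> R) :
  lambda (region f `&` region g) = (\int[mu]_x (overlap_len (f x) (g x))%:E)%E.
Proof.
apply: eq_integral => x _ /=.
by rewrite xsectionI !xsection_region lebesgue_measure_span0I.
Qed.

Lemma product_measure1_regionU (f g : D -> R) :
  lambda (region f `|` region g) = (\int[mu]_x (cover_len (f x) (g x))%:E)%E.
Proof.
apply: eq_integral => x _ /=.
by rewrite xsectionE preimage_setU -!xsectionE !xsection_region lebesgue_measure_span0U.
Qed.

End product_measure1_region.

Section integrable_minr_maxr.
Context d (T : measurableType d) (R : realType) (mu : {measure set T -> \bar R}).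
Variables f g : T -> R.
Hypotheses (If : mu.-integrable setT (EFin \o f)) (Ig : mu.-integrable setT (EFin \o g)).

Let Inorm : mu.-integrable setT (fun x => (`|f x|)%:E + (`|g x|)%:E)%E.
Proof. exact: integrableD (integrable_norm If) (integrable_norm Ig). Qed.

Let mf : measurable_fun setT f. Proof. exact/measurable_EFinP/(measurable_int mu If). Qed.
Let mg : measurable_fun setT g. Proof. exact/measurable_EFinP/(measurable_int mu Ig). Qed.

Lemma integrable_minr :
  mu.-integrable setT (EFin \o (fun x => Num.min (f x) (g x))).
Proof.
apply: le_integrable Inorm => //; first exact/measurable_EFinP/measurable_minr.
move=> x _ /=; rewrite lee_fin [X in _ <= X]ger0_norm ?addr_ge0//.
by rewrite /Num.min; case: ifP => _; rewrite ?lerDl ?lerDr.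
Qed.

Lemma integrable_maxr :
  mu.-integrable setT (EFin \o (fun x => Num.max (f x) (g x))).
Proof.
apply: le_integrable Inorm => //; first exact/measurable_EFinP/measurable_maxr.
move=> x _ /=; rewrite lee_fin [X in _ <= X]ger0_norm ?addr_ge0//.
by rewrite /Num.max; case: ifP => _; rewrite ?lerDl ?lerDr.
Qed.

End integrable_minr_maxr.

Section integral_parts.
Context d (T : measurableType d) (R : realType) (mu : {measure set T -> \bar R}).
Variable h : T -> R.

Lemma integral_set_ge0E :
  (\int[mu]_(x in [set x | (0 <= h x)%R]) (h x)%:E = \int[mu]_x (Num.max (h x) 0)%:E)%E.
Proof.
rewrite integral_mkcond; apply: eq_integral => x _; rewrite patchE.
have [h0|h0] := leP 0 (h x); first by rewrite mem_set// (max_idPl h0).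
by rewrite memNset ?(max_idPr (ltW h0))//= leNgt h0.
Qed.

Lemma integral_set_lt0E :
  (\int[mu]_(x in [set x | (h x < 0)%R]) (h x)%:E = \int[mu]_x (Num.min (h x) 0)%:E)%E.
Proof.
rewrite integral_mkcond; apply: eq_integral => x _; rewrite patchE.
have [h0|h0] := ltP (h x) 0; first by rewrite mem_set// (min_idPl (ltW h0)).
by rewrite memNset ?(min_idPr h0)//= ltNge h0.
Qed.

End integral_parts.

Section integral_half.
Context d (T : measurableType d) (R : realType) (mu : {measure set T -> \bar R}).
Variables u v w : T -> R.
Hypotheses (Iu : mu.-integrable setT (EFin \o u)) (Iv : mu.-integrable setT (EFin \o v))
  (Iw : mu.-integrable setT (EFin \o w)).
Local Open Scope ereal_scope.

Lemma integral_halfDB :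
  \int[mu]_x (2^-1 * (u x + v x - w x))%R%:E =
  2^-1%:E * (\int[mu]_x (u x)%:E + \int[mu]_x (v x)%:E - \int[mu]_x (w x)%:E).
Proof.
under eq_integral do rewrite EFinM EFinB EFinD.
rewrite integralZl//; last by apply: integrableB => //; exact: integrableD.
by rewrite integralB//; [rewrite integralD|exact: integrableD].
Qed.

Lemma integral_halfDD :
  \int[mu]_x (2^-1 * (u x + v x + w x))%R%:E =
  2^-1%:E * (\int[mu]_x (u x)%:E + \int[mu]_x (v x)%:E + \int[mu]_x (w x)%:E).
Proof.
under eq_integral do rewrite EFinM !EFinD.
rewrite integralZl//; last by do 2 apply: integrableD => //.
by rewrite integralD//; [rewrite integralD|exact: integrableD].
Qed.

End integral_half.

Section overlap_cover_integrals.
Context d (T : measurableType d) (R : realType) (mu : {measure set T -> \bar R}).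
Variables f g : T -> R.
Hypotheses (If : mu.-integrable setT (EFin \o f)) (Ig : mu.-integrable setT (EFin \o g)).

Let Izero : mu.-integrable setT (EFin \o cst (0 : R)).
Proof. exact: integrable0. Qed.

Local Open Scope ereal_scope.

Let Inorm_sub : mu.-integrable setT (EFin \o (fun x => `|f x - g x|)%R).
Proof.
apply: integrable_norm.
by apply: eq_integrable (integrableB _ If Ig) => // x; rewrite /= EFinB.
Qed.

Lemma integral_overlap_lenE :
  \int[mu]_x (overlap_len (f x) (g x))%:E =
  2^-1%:E * (L1norm mu f + L1norm mu g - L1norm mu (fun x => (f x - g x)%R)).
Proof.
under eq_integral do rewrite overlap_lenE.
by apply: integral_halfDB => //; exact: integrable_norm.
Qed.

Lemma integral_cover_lenE :
  \int[mu]_x (cover_len (f x) (g x))%:E =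
  2^-1%:E * (L1norm mu f + L1norm mu g + L1norm mu (fun x => (f x - g x)%R)).
Proof.
under eq_integral do rewrite cover_lenE.
by apply: integral_halfDD => //; exact: integrable_norm.
Qed.

Lemma integral_overlap_len_sign_split :
  \int[mu]_x (overlap_len (f x) (g x))%:E =
  \int[mu]_(x in [set x | (0 <= Num.min (f x) (g x))%R]) (Num.min (f x) (g x))%:E -
  \int[mu]_(x in [set x | (Num.max (f x) (g x) < 0)%R]) (Num.max (f x) (g x))%:E.
Proof.
rewrite (integral_set_ge0E _ (fun x => Num.min (f x) (g x))).
rewrite (integral_set_lt0E _ (fun x => Num.max (f x) (g x))).
rewrite -integralB_EFin//.
- exact: integrable_maxr (integrable_minr If Ig) Izero.
- exact: integrable_minr (integrable_maxr If Ig) Izero.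
Qed.

Lemma integral_cover_len_sign_split :
  \int[mu]_x (cover_len (f x) (g x))%:E =
  \int[mu]_(x in [set x | (0 <= Num.max (f x) (g x))%R]) (Num.max (f x) (g x))%:E -
  \int[mu]_(x in [set x | (Num.min (f x) (g x) < 0)%R]) (Num.min (f x) (g x))%:E.
Proof.
rewrite (integral_set_ge0E _ (fun x => Num.max (f x) (g x))).
rewrite (integral_set_lt0E _ (fun x => Num.min (f x) (g x))).
rewrite -integralB_EFin//.
- exact: integrable_maxr (integrable_maxr If Ig) Izero.
- exact: integrable_minr (integrable_minr If Ig) Izero.
Qed.

End overlap_cover_integrals.

Lemma bounded_integrable d (T : measurableType d) (R : realType)
    (mu : {finite_measure set T -> \bar R}) (h : T -> R) :
  measurable_fun setT h -> (exists M, forall x, `|h x| <= M) ->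
  mu.-integrable setT (EFin \o h).
Proof.
move=> mh [M hM].
apply: le_integrable (finite_measure_integrable_cst mu M measurableT) => //.
  exact/measurable_EFinP.
by move=> x _ /=; rewrite lee_fin (le_trans (hM x) (ler_norm M)).
Qed.

Theorem proposition2 (d : measure_display) (D : measurableType d) (R : realType)
  (mu : {finite_measure set D -> \bar R}) (f g : D -> R)
  (mf : measurable_fun [set: D] f) (mg : measurable_fun [set: D] g)
  (bf : exists M : R, forall x, `|f x| <= M)
  (bg : exists M : R, forall x, `|g x| <= M) :
  let lambda := (mu \x (@lebesgue_measure R))%E in
  let kcap := lambda (region f `&` region g) in
  let kcup := lambda (region f `|` region g) in
  let Nf := L1norm mu f in
  let Ng := L1norm mu g in
  let Nfg := L1norm mu (fun x => f x - g x) in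
  let Imin_pos := (\int[mu]_(x in [set x | (0 <= Num.min (f x) (g x))%R])
                      (Num.min (f x) (g x))%R%:E)%E in
  let Imax_neg := (\int[mu]_(x in [set x | (Num.max (f x) (g x) < 0)%R])
                      (Num.max (f x) (g x))%R%:E)%E in
  let Imax_pos := (\int[mu]_(x in [set x | (0 <= Num.max (f x) (g x))%R])
                      (Num.max (f x) (g x))%R%:E)%E in
  let Imin_neg := (\int[mu]_(x in [set x | (Num.min (f x) (g x) < 0)%R])
                      (Num.min (f x) (g x))%R%:E)%E in
  [/\ kcap = ((2^-1)%:E * (Nf + Ng - Nfg))%E,
      kcap = (Imin_pos - Imax_neg)%E
    & kcup != 0%E ->
      (kcap / kcup)%E = (((2^-1)%:E * (Nf + Ng - Nfg)) / ((2^-1)%:E * (Nf + Ng + Nfg)))%E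
      /\ (kcap / kcup)%E = ((Imin_pos - Imax_neg) / (Imax_pos - Imin_neg))%E].
Proof.
move=> lambda kcap kcup Nf Ng Nfg Imin_pos Imax_neg Imax_pos Imin_neg.
have If := bounded_integrable mu mf bf.
have Ig := bounded_integrable mu mg bg.
have kcap_norm : kcap = ((2^-1)%:E * (Nf + Ng - Nfg))%E.
  by rewrite /kcap /lambda product_measure1_regionI integral_overlap_lenE.
have kcap_split : kcap = (Imin_pos - Imax_neg)%E.
  by rewrite /kcap /lambda product_measure1_regionI integral_overlap_len_sign_split.
have kcup_norm : kcup = ((2^-1)%:E * (Nf + Ng + Nfg))%E.
  by rewrite /kcup /lambda product_measure1_regionU integral_cover_lenE.
have kcup_split : kcup = (Imax_pos - Imin_neg)%E.
  by rewrite /kcup /lambda product_measure1_regionU integral_cover_len_sign_split.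
split=> // _; split; first by rewrite {1}kcap_norm kcup_norm.
by rewrite {1}kcap_split kcup_split.
Qed.
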